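(* Let $M_f$ and $M_g$ be (extended) merge trees and $\varepsilon>0$. If there exists an $\varepsilon$-good map $\alpha^\varepsilon: M_f\to M_g$, then for every $\varepsilon'>\varepsilon$ there also exists an $\varepsilon'$-good map $\alpha^{\varepsilon'}: M_f\to M_g$.
   Context: An (extended) merge tree is a finite rooted tree, regarded as a topological space, with an infinite ray attached at its root, together with a continuous height function ($\tilde f$ on $M_f$, $\tilde g$ on $M_g$) that is strictly increasing along every edge toward the root and tends to $+\infty$ along the ray. For points $x,x'$ of a merge tree, $x'\succeq x$ means $x'$ lies on the unique upward path from $x$. For $\delta\ge0$, $i^\delta: M_f\to M_f$ sends $x$ to its unique ancestor with $\tilde f$-value $\tilde f(x)+\delta$; $j^\delta$ on $M_g$ is analogous. For $\varepsilon>0$, a continuous map $\alpha: M_f\to M_g$ is $\varepsilon$-good if: (a) (Range-Shift) $\tilde g(\alpha(v))=\tilde f(v)+\varepsilon$ for all $v\in M_f$; (b) (Ancestor-Shift) for all $v_1,v_2\in M_f$, $\alpha(v_1)\succeq\alpha(v_2)$ implies $i^{2\varepsilon}(v_1)\succeq i^{2\varepsilon}(v_2)$; (c) (Ancestor-Closeness) for every $w\in M_g\setminus\mathrm{Im}(\alpha)$ and its nearest ancestor $w^a\in\mathrm{Im}(\alpha)$, $|\tilde g(w^a)-\tilde g(w)|\le 2\varepsilon$. *)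

From mathcomp Require Import ssreflect ssrfun ssrbool eqtype ssrnat fintype.
From Stdlib Require Import Reals.

Set Implicit Arguments.
Unset Strict Implicit.

(* The geometric tree (with the infinite ray
   attached at the root) is described by its points below, and the height
   function on each edge is taken as the parameter of the edge (any
   continuous strictly increasing height function on an edge is a
   homeomorphism onto its range, so this is no loss of generality). *)
Record mtree := MTree {
  mt_V : finType;
  mt_par : mt_V -> mt_V;
  mt_root : mt_V;
  mt_ht : mt_V -> R;
  mt_par_root : mt_par mt_root = mt_root;
  mt_reach : forall v, exists n, iter n mt_par v = mt_root;
  mt_ht_par : forall v, v <> mt_root -> (mt_ht v < mt_ht (mt_par v))%R
}.

Definition vanc (T : mtree) (v w : mt_V T) : Prop :=
  exists n, iter n (@mt_par T) v = w.

(* A point of the geometric merge tree: a point at height [pt_h] on the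
   half-open edge from vertex [pt_v] up to its parent (or on the ray above
   the root, if pt_v is the root). *)
Record point (T : mtree) := Point {
  pt_v : mt_V T;
  pt_h : R;
  pt_ok : (mt_ht pt_v <= pt_h)%R /\
          (pt_v = mt_root T \/ (pt_h < mt_ht (mt_par pt_v))%R)
}.

Definition height (T : mtree) (x : point T) : R := pt_h x.

Definition succeq (T : mtree) (x' x : point T) : Prop :=
  vanc (pt_v x) (pt_v x') /\ (pt_h x <= pt_h x')%R.

(* i^delta(x) = y : y is the ancestor of x at height f(x) + delta
   (it exists and is unique; stated relationally). *)
Definition shift_to (T : mtree) (delta : R) (x y : point T) : Prop :=
  succeq y x /\ height y = (height x + delta)%R.

(* The tree (path) metric: d(x,y) = min over common ancestors z of
   (f z - f x) + (f z - f y).  [tnear x y r] means d(x,y) < r. *)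
Definition tnear (T : mtree) (x y : point T) (r : R) : Prop :=
  exists z, succeq z x /\ succeq z y /\
            (2 * height z - height x - height y < r)%R.

(* Continuity with respect to the topology of the geometric tree (which is
   the metric topology of the tree path metric). *)
Definition tcontinuous (T1 T2 : mtree) (a : point T1 -> point T2) : Prop :=
  forall x (e : R), (0 < e)%R ->
    exists d : R, (0 < d)%R /\ forall y, tnear x y d -> tnear (a x) (a y) e.

Definition in_image (T1 T2 : mtree) (a : point T1 -> point T2) (w : point T2)
  : Prop := exists v, a v = w.

Definition nearest_anc_in_image (T1 T2 : mtree) (a : point T1 -> point T2)
  (w wa : point T2) : Prop :=
  succeq wa w /\ in_image a wa /\
  forall z, in_image a z -> succeq z w -> succeq z wa.

Definition good_map (Tf Tg : mtree) (eps : R) (a : point Tf -> point Tg)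
  : Prop :=
  tcontinuous a /\
  (forall v, height (a v) = (height v + eps)%R) /\
  (forall v1 v2, succeq (a v1) (a v2) ->
     forall u1 u2, shift_to (2 * eps) v1 u1 -> shift_to (2 * eps) v2 u2 ->
       succeq u1 u2) /\
  (forall w, ~ in_image a w -> forall wa, nearest_anc_in_image a w wa ->
     (Rabs (height wa - height w) <= 2 * eps)%R).

(** Take [α' := i^δ ∘ α] with [δ = ε' - ε].  Range-Shift is immediate and
   [i^δ] does not increase the tree distance, so continuity survives.  The key
   fact is that [α] commutes with the upward shifts, [α (i^s v) = i^s (α v)]:
   by continuity and Range-Shift, [α] is locally monotone along the upward
   ray from [v], hence (real induction) monotone along the whole ray.  This
   turns Ancestor-Shift for [α'] at [v] into Ancestor-Shift for [α] at
   [i^δ v].  For Ancestor-Closeness, the image of [α] meets every upward ray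
   in a closed half-line (closed because the tree has finitely many edges and
   [α] is continuous), so every [w] has a nearest ancestor in [Im α], at most
   [2ε] above [w]; shifting it by [δ] gives a point of [Im α'] at most [2ε']
   above [w]. *)

From Stdlib Require Import Reals Lra Classical ClassicalEpsilon ProofIrrelevance.
From mathcomp Require Import ssreflect ssrfun ssrbool eqtype ssrnat fintype seq.

Local Open Scope R_scope.
Set Implicit Arguments.
Unset Strict Implicit.

Lemma lub_approx (E : R -> Prop) c s : is_lub E c -> s < c -> exists t, E t /\ s < t.
Proof.
move=> [_ Hleast] Hsc; apply: NNPP => Hnone.
suff : c <= s by lra.
apply: Hleast => t Et; apply: Rnot_lt_le => Hst; apply: Hnone; by exists t.
Qed.

Lemma real_induction (P : R -> Prop) :
  (forall c, 0 <= c -> (forall s, 0 <= s < c -> P s) -> P c) ->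
  (forall c, 0 <= c -> P c -> exists2 d, 0 < d & forall s, c <= s < c + d -> P s) ->
  forall t, 0 <= t -> P t.
Proof.
move=> closed open t t0.
pose E c := c <= t /\ forall s, 0 <= s < c -> P s.
have [c Hc] : {c | is_lub E c}.
  apply: completeness; first by exists t => c [].
  by exists 0; split => // s Hs; exfalso; lra.
have [Hub Hleast] := Hc.
have c0 : 0 <= c by apply: Hub; split => // s Hs; exfalso; lra.
have below s : 0 <= s < c -> P s.
  by move=> Hs; have [r [[_ Er] Hr]] := lub_approx Hc (proj2 Hs); apply: Er; lra.
have Pc := closed c c0 below.
have [<- // | Hct] : c = t \/ c < t by have := Hleast t (fun c1 (Ec : E c1) => Ec.1); lra.
have [d d0 Hd] := open c c0 Pc.
have [Hmt Hmd] := (Rmin_l t (c + d / 2), Rmin_r t (c + d / 2)).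
have : E (Rmin t (c + d / 2)).
  split => // s Hs; have [Hsc|Hsc] := Rlt_or_le s c; first by apply: below; lra.
  apply: Hd; lra.
move/Hub; have := Rmin_glb_lt t (c + d / 2) c Hct ltac:(lra); lra.
Qed.

Lemma finite_accumulation (U : finType) (F : U -> R -> Prop) t0 :
  (forall r, t0 < r -> exists u t, t0 < t < r /\ F u t) ->
  exists u, forall r, t0 < r -> exists t, t0 < t < r /\ F u t.
Proof.
move=> Hacc; apply: NNPP => Hnone.
have isolated u : exists2 r, t0 < r & forall t, t0 < t < r -> ~ F u t.
  apply: NNPP => Hu; apply: Hnone; exists u => r Hr; apply: NNPP => Hr'.
  by apply: Hu; exists r => // t Ht Fut; apply: Hr'; exists t.
have isolated_all (l : seq U) :
    exists2 r, t0 < r & forall u, u \in l -> forall t, t0 < t < r -> ~ F u t.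
  elim: l => [|u l [r Hr Hl]]; first by exists (t0 + 1); [lra | ].
  have [r' Hr' Hu] := isolated u.
  have [Hmr Hmr'] := (Rmin_l r r', Rmin_r r r').
  exists (Rmin r r') => [|v]; first exact: Rmin_glb_lt.
  rewrite in_cons => /orP [/eqP -> | Hv] t Ht; [apply: Hu | apply: (Hl v Hv t)]; lra.
have [r Hr Hl] := isolated_all (enum U).
have [u [t [Ht Fut]]] := Hacc r Hr.
by apply: (Hl u _ t Ht Fut); rewrite mem_enum.
Qed.

Section Tree.

Variable T : mtree.
Local Notation par := (@mt_par T).
Local Notation root := (mt_root T).

Lemma iter_par_root n : iter n par root = root.
Proof. by elim: n => //= n ->; rewrite mt_par_root. Qed.

Lemma ht_iter_par n (v : mt_V T) : mt_ht v <= mt_ht (iter n par v).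
Proof.
elim: n => [|n IH] /=; first exact: Rle_refl.
have [E|E] := classic (iter n par v = root); first by rewrite E mt_par_root -E.
have := mt_ht_par E; lra.
Qed.

Lemma vanc_refl (v : mt_V T) : vanc v v.
Proof. by exists 0%N. Qed.

Lemma vanc_trans (u v w : mt_V T) : vanc u v -> vanc v w -> vanc u w.
Proof. by move=> [n <-] [m <-]; exists (m + n)%N; rewrite iterD. Qed.

Lemma vanc_total (w u v : mt_V T) : vanc w u -> vanc w v -> vanc u v \/ vanc v u.
Proof.
move=> [n <-] [m <-]; case: (leqP n m) => [/subnK <- | /ltnW/subnK <-].
- by left; exists (m - n)%N; rewrite iterD.
- by right; exists (n - m)%N; rewrite iterD.
Qed.

Lemma vanc_neq_ht_par (u v : mt_V T) :
  vanc u v -> u <> v -> u <> root /\ mt_ht (par u) <= mt_ht v.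
Proof.
case=> [[|n] <-] Hneq; first by case: Hneq.
split; first by move=> Eu; apply: Hneq; rewrite Eu iter_par_root.
by rewrite iterSr; apply: ht_iter_par.
Qed.

Lemma pt_h_lt_anc (x : point T) v : vanc (pt_v x) v -> pt_v x <> v -> pt_h x < mt_ht v.
Proof.
move=> Hxv Hneq; have [Hnr Hpar] := vanc_neq_ht_par Hxv Hneq.
by case: (pt_ok x).2 => // Hlt; lra.
Qed.

Lemma point_eq (x y : point T) : pt_v x = pt_v y -> pt_h x = pt_h y -> x = y.
Proof.
case: x y => v h p [v' h' p'] /= Ev Eh; subst v' h'.
by rewrite (proof_irrelevance _ p p').
Qed.

Lemma vertex_point_ok (v : mt_V T) :
  mt_ht v <= mt_ht v /\ (v = root \/ mt_ht v < mt_ht (par v)).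
Proof.
split; first exact: Rle_refl.
by have [|Hnr] := classic (v = root); [left | right; exact: mt_ht_par].
Qed.

Definition vertex_point (v : mt_V T) : point T := Point (vertex_point_ok v).

Lemma succeq_refl (x : point T) : succeq x x.
Proof. by split; [exact: vanc_refl | exact: Rle_refl]. Qed.

Lemma succeq_trans (x y z : point T) : succeq z y -> succeq y x -> succeq z x.
Proof. by move=> [Hyz Hhyz] [Hxy Hhxy]; split; [exact: vanc_trans Hxy Hyz | lra]. Qed.

Lemma succeq_edge (x y : point T) : pt_v y = pt_v x -> pt_h x <= pt_h y -> succeq y x.
Proof. by move=> Eyx Hxy; split => //; rewrite Eyx; exact: vanc_refl. Qed.

Lemma succeq_by_height (x y z : point T) :
  succeq y x -> succeq z x -> pt_h y <= pt_h z -> succeq z y.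
Proof.
move=> [Hxy _] [Hxz _] Hyz; split => //.
case: (vanc_total Hxy Hxz) => // Hzy.
have [-> | Hneq] := classic (pt_v z = pt_v y); first exact: vanc_refl.
have := pt_h_lt_anc Hzy Hneq; have := (pt_ok y).1; lra.
Qed.

Lemma succeq_ht_inj (x y z : point T) :
  succeq y x -> succeq z x -> pt_h y = pt_h z -> y = z.
Proof.
move=> Hyx Hzx Eyz; have [Hyz _] := succeq_by_height Hyx Hzx (Req_le _ _ Eyz).
apply: point_eq => //; apply: NNPP => Hneq.
have := pt_h_lt_anc Hyz Hneq; have := (pt_ok z).1; lra.
Qed.

Lemma ancestor_at_height (x : point T) h :
  pt_h x <= h -> exists y, succeq y x /\ pt_h y = h.
Proof.
have [n] := mt_reach (pt_v x).
elim: n x => [|n IH] x Hn Hh;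
  have [Hedge | /not_or_and [Hnr /Rnot_lt_le Hpar]] :=
    classic (pt_v x = root \/ h < mt_ht (par (pt_v x)));
  try by exists (Point (conj (Rle_trans _ _ _ (pt_ok x).1 Hh) Hedge));
         split => //; apply: succeq_edge => //.
- by case: Hnr.
- have Hn' : iter n par (par (pt_v x)) = root by rewrite -iterSr.
  have [y [Hyp Hy]] := IH (vertex_point (par (pt_v x))) Hn' Hpar.
  exists y; split => //; apply: succeq_trans Hyp _; split; first by exists 1%N.
  by case: (pt_ok x).2 => [//| /= Hlt]; lra.
Qed.

(** [i^s x]; the value is unspecified for [s < 0]. *)
Definition shift (x : point T) (s : R) : point T :=
  epsilon (inhabits x) (fun y => 0 <= s -> shift_to s x y).

Lemma shift_to_shift (x : point T) s : 0 <= s -> shift_to s x (shift x s).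
Proof.
move=> s0; apply: (epsilon_spec (inhabits x) (fun y => 0 <= s -> shift_to s x y)) => //.
have [|y Hy] := @ancestor_at_height x (pt_h x + s); first lra.
by exists y.
Qed.

Lemma shift_succeq (x : point T) s : 0 <= s -> succeq (shift x s) x.
Proof. by move/(shift_to_shift x) => []. Qed.

Lemma shift_ht (x : point T) s : 0 <= s -> pt_h (shift x s) = pt_h x + s.
Proof. by move/(shift_to_shift x) => []. Qed.

Lemma shift_eq (x y : point T) s : succeq y x -> pt_h y = pt_h x + s -> shift x s = y.
Proof.
move=> Hyx Hy; have s0 : 0 <= s by have := Hyx.2; lra.
by apply: succeq_ht_inj (shift_succeq x s0) Hyx _; rewrite shift_ht.
Qed.

Lemma shift_to_eq (x y : point T) s : shift_to s x y -> shift x s = y.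
Proof. by case; apply: shift_eq. Qed.

Lemma shift0 (x : point T) : shift x 0 = x.
Proof. by apply: shift_eq; [exact: succeq_refl | rewrite Rplus_0_r]. Qed.

Lemma shift_shift (x : point T) s t :
  0 <= s -> 0 <= t -> shift (shift x s) t = shift x (s + t).
Proof.
move=> s0 t0; symmetry; apply: shift_eq.
- exact: succeq_trans (shift_succeq _ t0) (shift_succeq _ s0).
- by rewrite !shift_ht //; ring.
Qed.

Lemma shift_le (x : point T) s t : 0 <= s <= t -> succeq (shift x t) (shift x s).
Proof.
move=> Hst; have [s0 t0] : 0 <= s /\ 0 <= t by lra.
apply: succeq_by_height (shift_succeq x s0) (shift_succeq x t0) _.
by rewrite !shift_ht //; lra.
Qed.

Lemma succeq_shift (x y : point T) s : 0 <= s -> succeq y x -> succeq (shift y s) (shift x s).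
Proof.
move=> s0 Hyx.
apply: succeq_by_height (shift_succeq x s0) (succeq_trans (shift_succeq y s0) Hyx) _.
by rewrite !shift_ht //; have := Hyx.2; lra.
Qed.

Lemma tnear_sym (x y : point T) r : tnear x y r -> tnear y x r.
Proof. by move=> [z [Hzx [Hzy Hz]]]; exists z; split; [|split] => //; lra. Qed.

Lemma tnear_shift (x y : point T) s e :
  0 <= s -> tnear x y e -> tnear (shift x s) (shift y s) e.
Proof.
move=> s0 [z [Hzx [Hzy Hz]]]; exists (shift z s).
split; [|split]; try exact: succeq_shift.
by rewrite /height !shift_ht //; rewrite /height in Hz; lra.
Qed.

Lemma tnear_shift_le (x : point T) s t d :
  0 <= s <= t -> t < s + d -> tnear (shift x s) (shift x t) d.
Proof.
move=> Hst Htd; exists (shift x t); split; [exact: shift_le | split].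
- exact: succeq_refl.
- by rewrite /height !shift_ht; lra.
Qed.

Definition headroom (x : point T) g :=
  pt_v x = root \/ pt_h x + g <= mt_ht (par (pt_v x)).

Lemma headroom_exists (x : point T) : exists2 g, 0 < g & headroom x g.
Proof.
case: (pt_ok x).2 => [Hroot | Hlt]; first by exists 1; [lra | left].
by exists (mt_ht (par (pt_v x)) - pt_h x); [lra | right; lra].
Qed.

Lemma headroom_same_edge (x y : point T) g :
  headroom x g -> succeq y x -> pt_h y < pt_h x + g -> pt_v y = pt_v x.
Proof.
move=> Hg [Hxy _] Hy; apply: NNPP => Hneq.
have [Hnr Hpar] := vanc_neq_ht_par Hxy (not_eq_sym Hneq).
by case: Hg => // Hg; have := (pt_ok y).1; lra.
Qed.

Lemma tnear_headroom_edge (x y : point T) g :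
  headroom x g -> tnear x y g -> pt_h x <= pt_h y -> pt_v y = pt_v x.
Proof.
move=> Hg [z [Hzx [[Hyz Hhyz] Hz]]] Hxy; rewrite /height in Hz.
have Ezx : pt_v z = pt_v x by apply: (headroom_same_edge Hg Hzx); have := Hzx.2; lra.
rewrite Ezx in Hyz; apply: NNPP => Hneq.
by have := pt_h_lt_anc Hyz Hneq; have := (pt_ok x).1; lra.
Qed.

Lemma tnear_headroom_below (x y : point T) g :
  headroom x g -> tnear x y g -> pt_h y <= pt_h x -> succeq x y.
Proof.
move=> Hg [z [Hzx [[Hyz Hhyz] Hz]]] Hyx; rewrite /height in Hz.
have Ezx : pt_v z = pt_v x by apply: (headroom_same_edge Hg Hzx); have := Hzx.2; lra.
by rewrite Ezx in Hyz; split.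
Qed.

Lemma root_ray (x : point T) : mt_ht root <= pt_h x -> pt_v x = root.
Proof.
move=> Hx; apply: NNPP => Hneq; have [n Hn] := mt_reach (pt_v x).
by have := pt_h_lt_anc (ex_intro _ n Hn) Hneq; lra.
Qed.

Lemma ray_point_eq (x y : point T) : mt_ht root <= pt_h x -> pt_h x = pt_h y -> x = y.
Proof. by move=> Hx Exy; apply: point_eq => //; rewrite !root_ray // -Exy. Qed.

End Tree.

Section ContinuousShiftMap.

Variables (Tf Tg : mtree) (a : point Tf -> point Tg) (eps : R).
Hypothesis a_cont : tcontinuous a.
Hypothesis a_ht : forall v, height (a v) = height v + eps.

Lemma map_locally_monotone (x : point Tf) : exists2 d, 0 < d & forall y, tnear x y d ->
  (pt_h y <= pt_h x -> succeq (a x) (a y)) /\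
  (pt_h x <= pt_h y -> pt_v (a y) = pt_v (a x)).
Proof.
have [g g0 Hg] := headroom_exists (a x).
have [d [d0 Hd]] := a_cont x g0.
exists d => // y /Hd Hn; move: (a_ht x) (a_ht y); rewrite /height => Hx Hy.
split => Hxy; [apply: tnear_headroom_below Hg Hn _ | apply: tnear_headroom_edge Hg Hn _]; lra.
Qed.

Lemma map_ray_succeq (x : point Tf) s : 0 <= s -> succeq (a (shift x s)) (a x).
Proof.
move: s; apply: real_induction => c c0 Hc.
- have [-> | cpos] : c = 0 \/ 0 < c by lra.
    by rewrite shift0; exact: succeq_refl.
  have [d d0 Hd] := map_locally_monotone (shift x c).
  pose s := Rmax 0 (c - d / 2).
  have [s0 Hsd] : 0 <= s /\ c - d / 2 <= s := conj (Rmax_l _ _) (Rmax_r _ _).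
  have sc : s < c by apply: Rmax_lub_lt; lra.
  have Hn : tnear (shift x c) (shift x s) d by apply: tnear_sym; apply: tnear_shift_le; lra.
  by apply: succeq_trans ((Hd _ Hn).1 _) (Hc s _); [rewrite !shift_ht //; lra | lra].
- have [d d0 Hd] := map_locally_monotone (shift x c).
  exists d => // s Hs.
  have Hn : tnear (shift x c) (shift x s) d by apply: tnear_shift_le; lra.
  have Hcs : pt_h (shift x c) <= pt_h (shift x s) by rewrite !shift_ht; lra.
  apply: succeq_trans _ Hc; apply: succeq_edge ((Hd _ Hn).2 Hcs) _.
  by move: (a_ht (shift x c)) (a_ht (shift x s)); rewrite /height; lra.
Qed.

Lemma map_shift (x : point Tf) s : 0 <= s -> a (shift x s) = shift (a x) s.
Proof.
move=> s0; symmetry; apply: shift_eq; first exact: map_ray_succeq.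
by move: (a_ht (shift x s)) (a_ht x); rewrite /height shift_ht //; lra.
Qed.

Lemma in_image_shift (w : point Tg) t t' :
  0 <= t <= t' -> in_image a (shift w t) -> in_image a (shift w t').
Proof.
move=> Ht [v Hv]; exists (shift v (t' - t)).
by rewrite map_shift ?Hv ?shift_shift; try lra; congr shift; ring.
Qed.

Lemma image_meets_ray (w : point Tg) : exists2 t, 0 <= t & in_image a (shift w t).
Proof.
pose v0 := vertex_point (mt_root Tf).
pose H := Rmax (Rmax (pt_h (a v0)) (pt_h w)) (mt_ht (mt_root Tg)).
have := Rmax_l (pt_h (a v0)) (pt_h w); have := Rmax_r (pt_h (a v0)) (pt_h w).
have := Rmax_l (Rmax (pt_h (a v0)) (pt_h w)) (mt_ht (mt_root Tg)).
have := Rmax_r (Rmax (pt_h (a v0)) (pt_h w)) (mt_ht (mt_root Tg)).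
rewrite -/H => HR Hm Hw Hav0.
exists (H - pt_h w); first lra.
exists (shift v0 (H - pt_h (a v0))); rewrite map_shift; last lra.
by apply: ray_point_eq; rewrite !shift_ht; lra.
Qed.

Lemma image_ray_closed (w : point Tg) t0 : 0 <= t0 ->
  (forall t, t0 < t -> in_image a (shift w t)) -> in_image a (shift w t0).
Proof.
move=> t00 Hall.
have ht_preimage t v : 0 <= t -> a v = shift w t -> pt_h v = pt_h w + t - eps.
  by move=> t0' Hv; move: (a_ht v); rewrite Hv /height shift_ht //; lra.
pose F u t := exists2 v, a v = shift w t & pt_v v = u.
have [u Hu] : exists u, forall r, t0 < r -> exists t, t0 < t < r /\ F u t.
  apply: finite_accumulation => r Hr.
  have [v Hv] := Hall ((t0 + r) / 2) ltac:(lra).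
  by exists (pt_v v), ((t0 + r) / 2); split; [lra | exists v].
have ok : mt_ht u <= pt_h w + t0 - eps /\
          (u = mt_root Tf \/ pt_h w + t0 - eps < mt_ht (mt_par u)).
  split.
  - apply: Rnot_lt_le => Hlt.
    have [t [Ht [v Hv Hvu]]] := Hu (t0 + (mt_ht u - (pt_h w + t0 - eps))) ltac:(lra).
    have := ht_preimage t v ltac:(lra) Hv; have := (pt_ok v).1; rewrite Hvu; lra.
  - have [t [Ht [v Hv <-]]] := Hu (t0 + 1) ltac:(lra).
    have := ht_preimage t v ltac:(lra) Hv.
    by case: (pt_ok v).2 => [|Hlt]; [left | right; lra].
pose vs := Point ok.
exists vs.
have [d d0 Hd] := map_locally_monotone vs.
have [g g0 Hg] := headroom_exists (shift w t0).
have [Hmd Hmg] := (Rmin_l d g, Rmin_r d g).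
have [t [Ht [v Hv Hvu]]] := Hu (t0 + Rmin d g) ltac:(have := Rmin_glb_lt d g 0 d0 g0; lra).
have hv := ht_preimage t v ltac:(lra) Hv.
have Hn : tnear vs v d.
  exists v; split; [|split; [exact: succeq_refl |]].
  - by apply: succeq_edge => //=; lra.
  - by rewrite /height /=; lra.
have Ehvs : pt_h (a vs) = pt_h w + t0 by move: (a_ht vs); rewrite /height /=; lra.
apply: point_eq; last by rewrite Ehvs shift_ht.
rewrite -((Hd v Hn).2 _); last by rewrite /=; lra.
rewrite Hv; apply: (headroom_same_edge Hg (shift_le w _)); first lra.
by rewrite !shift_ht; lra.
Qed.

Lemma nearest_anc_in_image_exists (w : point Tg) : exists wa, nearest_anc_in_image a w wa.
Proof.
pose E t := forall s, 0 <= s < t -> ~ in_image a (shift w s).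
have [t1 t10 Ht1] := image_meets_ray w.
have [t0 Hlub] : {t0 | is_lub E t0}.
  apply: completeness.
  - by exists t1 => t Et; apply: Rnot_lt_le => Ht; exact: Et t1 ltac:(lra) Ht1.
  - by exists 0 => s Hs; exfalso; lra.
have t00 : 0 <= t0 by apply: Hlub.1 => s Hs; exfalso; lra.
have above t : t0 < t -> in_image a (shift w t).
  move=> Ht; apply: NNPP => Hn.
  suff : t <= t0 by lra.
  by apply: Hlub.1 => s Hs /(in_image_shift (t' := t)) Hin; apply/Hn/Hin; lra.
exists (shift w t0); split; first exact: shift_succeq.
split=> [|z Hz Hzw]; first exact: image_ray_closed t00 above.
apply: (succeq_by_height (shift_succeq w t00) Hzw); rewrite shift_ht //.
apply: Rnot_lt_le => Hlt.
have [t [Et Ht]] := lub_approx (s := pt_h z - pt_h w) Hlub ltac:(lra).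
apply: (Et (pt_h z - pt_h w)); first by have := Hzw.2; lra.
by rewrite (shift_eq Hzw) //; ring.
Qed.

End ContinuousShiftMap.

Lemma anc_in_image_within (Tf Tg : mtree) (a : point Tf -> point Tg) eps :
  0 <= eps -> good_map eps a ->
  forall w, exists y, [/\ in_image a y, succeq y w & pt_h y <= pt_h w + 2 * eps].
Proof.
move=> eps0 [Hc [Hr [_ Hcl]]] w.
have [wa Hwa] := nearest_anc_in_image_exists Hc Hr w.
have [Hwaw [Hwai Hmin]] := Hwa; exists wa; split => //.
have [Hw | Hw] := classic (in_image a w).
- by have := (Hmin w Hw (succeq_refl w)).2; lra.
- by have := Rle_abs (height wa - height w); have := Hcl w Hw wa Hwa; rewrite /height; lra.
Qed.

Lemma good_map_shift (Tf Tg : mtree) (a : point Tf -> point Tg) eps dl :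
  0 <= eps -> 0 <= dl -> good_map eps a ->
  good_map (eps + dl) (fun v => shift (a v) dl).
Proof.
move=> eps0 dl0 Ha; have [Hc [Hr [Hb _]]] := Ha.
split; [|split; [|split]].
- move=> x e /(Hc x) [d [d0 Hd]]; exists d; split => // y /Hd.
  exact: tnear_shift.
- by move=> v; rewrite /height shift_ht //; move: (Hr v); rewrite /height; lra.
- move=> v1 v2; rewrite -!(map_shift Hc Hr) // => /Hb Hs.
  move=> u1 u2 /shift_to_eq <- /shift_to_eq <-.
  have E v : shift v (2 * (eps + dl)) = shift (shift (shift v dl) (2 * eps)) dl.
    by rewrite !shift_shift; try lra; congr shift; ring.
  by rewrite !E; apply: succeq_shift => //; apply: Hs; apply: shift_to_shift; lra.
- move=> w _ wa [Hwaw [_ Hmin]].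
  have [y [[v <-] Hyw Hy]] := anc_in_image_within eps0 Ha w.
  have Hin : in_image (fun v => shift (a v) dl) (shift (a v) dl) by exists v.
  have := (Hmin _ Hin (succeq_trans (shift_succeq _ dl0) Hyw)).2.
  by rewrite /height shift_ht // Rabs_pos_eq; have := Hwaw.2; lra.
Qed.

Unset Implicit Arguments.

Theorem lemma4p2 (Mf Mg : mtree) (eps : R) :
  (0 < eps)%R ->
  (exists a : point Mf -> point Mg, good_map eps a) ->
  forall eps' : R, (eps < eps')%R ->
    exists a' : point Mf -> point Mg, good_map eps' a'.
Proof.
move=> eps0 [a Ha] eps' Heps'.
exists (fun v => shift (a v) (eps' - eps)).
rewrite -{1}(Rplus_minus eps eps').
by apply: good_map_shift Ha; lra.
Qed.
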